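(* Let $U,W$ be smooth on $\mathbb R^d$ with $\nu(dx)=e^{-W}dx$ and $\mu(dx)=e^{-(U+W)}dx$ probability measures, and assume $\nu$ satisfies a weighted Poincaré inequality with weight $\omega$ and constant $C_{P,\omega}(\nu)$. Suppose there exists $\varepsilon>0$ such that $s:=\sup_xC_{P,\omega}(\nu)\frac{1+\varepsilon}{4}|\nabla U(x)|^2\omega^2(x)<1$. Then $\mu$ satisfies a weighted Poincaré inequality with weight $\omega$ and $C_{P,\omega}(\mu)\le\frac{(1+\varepsilon^{-1})C_{P,\omega}(\nu)}{1-s}$.
   Context: A probability measure $\mu$ satisfies a weighted Poincaré inequality with weight $\omega\ge0$ and constant $C_{P,\omega}(\mu)$ if for all smooth $f$, $\mathrm{Var}_\mu(f)\le C_{P,\omega}(\mu)\int|\nabla f|^2\omega^2d\mu$. *)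

From HB Require Import structures.
From mathcomp Require Import all_boot all_order all_algebra.
From mathcomp Require Import all_classical all_reals all_analysis.
Set Implicit Arguments.
Unset Strict Implicit.
Unset Printing Implicit Defensive.
Import Order.TTheory GRing.Theory Num.Theory.
Import numFieldNormedType.Exports.
Local Open Scope classical_set_scope.
Local Open Scope ring_scope.

(* R^d is represented, for calculus, by the normed space 'rV[R]_d, and,
   for measure theory, by d.-tuple R (equipped with the product Borel
   sigma-algebra of the library). *)
Definition rv_of (R : realType) (d : nat) (t : d.-tuple R) : 'rV[R]_d :=
  \row_(i < d) tnth t i.

Definition basis_vec (R : realType) (d : nat) (i : 'I_d) : 'rV[R]_d :=
  delta_mx 0 i.

Definition partial (R : realType) (d : nat) (i : 'I_d)
  (f : 'rV[R]_d -> R) (x : 'rV[R]_d) : R := 'D_(basis_vec R i) f x.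

Definition grad_norm2 (R : realType) (d : nat) (f : 'rV[R]_d -> R)
  (x : 'rV[R]_d) : R := \sum_(i < d) (partial i f x) ^+ 2.

Fixpoint Ck (R : realType) (d : nat) (k : nat) (f : 'rV[R]_d -> R) : Prop :=
  match k with
  | 0 => continuous f
  | k'.+1 => (forall x, differentiable f x) /\
             (forall i : 'I_d, Ck k' (partial i f))
  end.

Definition smooth (R : realType) (d : nat) (f : 'rV[R]_d -> R) : Prop :=
  forall k, Ck k f.

(* lam is the Lebesgue measure on R^d: it gives to every closed box its
   volume (this determines it uniquely on the Borel sets). *)
Definition is_lebesgue_measure (R : realType) (d : nat)
  (lam : {measure set (d.-tuple R) -> \bar R}) : Prop :=
  forall a b : 'I_d -> R, (forall i, a i <= b i) ->
    lam [set t | forall i, a i <= tnth t i <= b i] =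
    (\prod_(i < d) (b i - a i))%:E.

Definition dint (R : realType) (d : nat)
  (lam : {measure set (d.-tuple R) -> \bar R})
  (rho g : 'rV[R]_d -> R) : \bar R :=
  (\int[lam]_t (g (rv_of t) * rho (rv_of t))%:E)%E.

Definition dmean (R : realType) (d : nat)
  (lam : {measure set (d.-tuple R) -> \bar R})
  (rho f : 'rV[R]_d -> R) : R := fine (dint lam rho f).

Definition dvar (R : realType) (d : nat)
  (lam : {measure set (d.-tuple R) -> \bar R})
  (rho f : 'rV[R]_d -> R) : \bar R :=
  dint lam rho (fun x => (f x - dmean lam rho f) ^+ 2).

(* The probability measure rho(x) dx satisfies the weighted Poincare
   inequality with weight omega and constant C: for every smooth f
   (with finite second moment, so that the variance is defined),
   Var(f) <= C * \int |grad f|^2 omega^2 rho dx. *)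
Definition weighted_poincare (R : realType) (d : nat)
  (lam : {measure set (d.-tuple R) -> \bar R})
  (rho omega : 'rV[R]_d -> R) (C : R) : Prop :=
  forall f : 'rV[R]_d -> R, smooth f ->
    measurable_fun [set: d.-tuple R] (f \o @rv_of R d) ->
    (dint lam rho (fun x => (f x ^+ 2)%R) < +oo)%E ->
    (dvar lam rho f <= C%:E * dint lam rho (fun x => (grad_norm2 f x * omega x ^+ 2)%R))%E.

From HB Require Import structures.
From mathcomp Require Import all_boot all_order all_algebra.
From mathcomp Require Import all_classical all_reals all_analysis.
From mathcomp Require Import measurable_realfun.
From mathcomp Require Import ring lra.
Import Order.TTheory GRing.Theory Num.Theory.
Import numFieldNormedType.Exports.
Local Open Scope classical_set_scope.
Local Open Scope ring_scope.

(* Given f, choose m so that g := (f - m) e^{-U/2} has mean zero under nu.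
   Since g^2 e^{-W} = (f - m)^2 e^{-(U+W)},
     Var_mu(f) <= int (f - m)^2 dmu = Var_nu(g) <= C int |grad g|^2 w^2 dnu.
   As grad g = e^{-U/2} (grad f - (f - m) grad U / 2), Young's inequality
   (a - b)^2 <= (1 + 1/eps) a^2 + (1 + eps) b^2 bounds the right-hand side by
     (1 + 1/eps) C int |grad f|^2 w^2 dmu + s int (f - m)^2 dmu,
   and the last term is absorbed into the left-hand side because s < 1. *)

Lemma rv_ofE (R : realType) d (t : d.-tuple R) i : rv_of t ord0 i = tnth t i.
Proof. by rewrite /rv_of mxE. Qed.

Lemma measurable_tuple_ball (R : realType) d (c : 'I_d -> R) (r : R) :
  measurable [set t : d.-tuple R | forall i, `|tnth t i - c i| < r].
Proof.
rewrite (_ : [set t | _] = \bigcap_(i in [set: 'I_d])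
   ((@tnth _ R ^~ i) @^-1` `](c i - r), (c i + r)[%classic)); last first.
  apply/seteqP; split => t /=.
    by move=> h i _; rewrite /= in_itv /= -ltr_distl h.
  by move=> h i; have := h i I; rewrite /= in_itv /= -ltr_distl.
rewrite -[X in measurable X]setCK setC_bigcap; apply: measurableC.
apply: countable_bigcupT_measurable; first exact: countableP.
move=> i; apply: measurableC; rewrite -[X in measurable X]setTI.
exact: measurable_tnth.
Qed.

Lemma ball_rV (R : realType) d (x y : 'rV[R]_d) (e : R) :
  0 < e -> (forall i, `|x ord0 i - y ord0 i| < e) -> ball x e y.
Proof. by move=> e0 h; split => // i j; rewrite (ord1 i) /ball /=. Qed.

(* The preimage of ]a, +oo[ is the union of the rational boxes on which h > a;
   there are countably many of them. *)
Lemma continuous_measurable_rv_of (R : realType) d (h : 'rV[R]_d -> R) :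
  continuous h -> measurable_fun [set: d.-tuple R] (h \o @rv_of R d).
Proof.
move=> hc; apply: (measurability _ (measurable_realfun.RGenOInfty.measurableE R)) => //.
move=> /= _ [_ [a ->] <-]; rewrite setTI.
pose box (p : 'rV[rat]_d * nat) (t : 'I_d -> R) :=
  forall i, `|t i - ratr (p.1 ord0 i)| < p.2.+1%:R^-1.
pose good p := forall y : 'rV[R]_d, box p (y ord0) -> a < h y.
pose S p : set (d.-tuple R) :=
  if pselect (good p) then [set t | box p (tnth t)] else set0.
rewrite (_ : _ @^-1` _ = \bigcup_p S p).
  apply: countable_bigcupT_measurable; first exact: countableP.
  move=> p; rewrite /S; case: (pselect (good p)) => gp.
    exact: measurable_tuple_ball.
  exact: measurable0.
apply/seteqP; split => t /=; last first.
  move=> [p _]; rewrite /S; case: pselect => // gp /= tp.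
  rewrite in_itv /= andbT; apply: gp => i; rewrite rv_ofE; exact: tp.
rewrite in_itv /= andbT => ha; set x := rv_of t.
have /nbhs_ballP [e e0 he] : \forall y \near x, a < h y := hc x _ (lt_nbhsr ha).
have [k hk] := @ltr_add_invr R 0 (e / 2) (divr_gt0 e0 (ltr0Sn R 1)).
rewrite add0r in hk.
have /choice [q hq] : forall i : 'I_d, exists q : rat,
    ratr q \in `](x ord0 i - k.+1%:R^-1), (x ord0 i + k.+1%:R^-1)[.
  move=> i; apply: rat_in_itvoo.
  by rewrite ltrD2l gtrN // invr_gt0 (ltr0Sn R k).
have xq i : `|x ord0 i - ratr (q i)| < k.+1%:R^-1.
  by have := hq i; rewrite in_itv /= -ltr_distl distrC.
exists (\row_i q i, k) => //; rewrite /S; case: pselect => /= [_|ngood].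
  by move=> i; rewrite mxE -rv_ofE.
exfalso; apply: ngood => y hy; apply: he; apply: ball_rV => // i.
have := hy i; rewrite /= mxE => yq.
rewrite (le_lt_trans (ler_distD (ratr (q i)) _ _)) // [e]splitr.
by apply: ltrD; apply: lt_trans hk; rewrite // distrC.
Qed.

Section SmoothFunctions.
Context {R : realType} {d : nat}.
Implicit Types (f g : 'rV[R]_d -> R) (i : 'I_d).

Lemma Ck_continuous k f : Ck k f -> continuous f.
Proof. by case: k => [//|k] [df _] x; exact: differentiable_continuous. Qed.

Lemma smooth_continuous f : smooth f -> continuous f.
Proof. by move=> sf; exact: (@Ck_continuous 0). Qed.

Lemma CkS k f : Ck k.+1 f -> Ck k f.
Proof.
elim: k f => [|k IH] f; first by move=> /Ck_continuous.
by move=> [df hp]; split => // i; apply: IH; exact: hp.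
Qed.

Lemma partialD i f g x : differentiable f x -> differentiable g x ->
  partial i (f + g) x = partial i f x + partial i g x.
Proof. by move=> df dg; rewrite /partial deriveD //; exact: diff_derivable. Qed.

Lemma partialM i f g x : differentiable f x -> differentiable g x ->
  partial i (f * g) x = partial i f x * g x + f x * partial i g x.
Proof.
move=> df dg; rewrite /partial deriveM; try exact: diff_derivable.
by rewrite /GRing.scale /= addrC mulrC.
Qed.

Lemma partial_cst i (c : R) : partial i (cst c) = cst 0.
Proof. by apply/funext => x; rewrite /partial derive_cst. Qed.

Lemma derive_dir_expR (v y : R) : 'D_v (@expR R) y = v * expR y.
Proof.
have dy : differentiable (@expR R) y.
  by apply/derivable1_diffP; exact: derivable_expR.
rewrite deriveE // -[v]mulr1 linearZ /= -deriveE //.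
by rewrite derive_val /GRing.scale /= mulr1.
Qed.

Lemma partial_expR i f x : differentiable f x ->
  partial i (expR \o f) x = expR (f x) * partial i f x.
Proof.
move=> df.
have de : differentiable (@expR R) (f x).
  by apply/derivable1_diffP; exact: derivable_expR.
rewrite /partial deriveE; last exact: differentiable_comp.
by rewrite diff_comp //= -deriveE // derive_dir_expR -deriveE // mulrC.
Qed.

Lemma Ck_cst k (c : R) : Ck k (cst c : 'rV[R]_d -> R).
Proof.
elim: k c => [|k IH] c; first exact: cst_continuous.
split=> [x|i]; first exact: differentiable_cst.
by rewrite partial_cst; exact: IH.
Qed.

Lemma CkD k f g : Ck k f -> Ck k g -> Ck k (f + g).
Proof.
elim: k f g => [|k IH] f g.
  by move=> /= cf cg x; apply: continuousD; [exact: cf|exact: cg].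
move=> [df pf] [dg pg]; split=> [x|i]; first exact: differentiableD.
have -> : partial i (f + g) = partial i f + partial i g.
  by apply/funext => x; rewrite partialD.
by apply: IH; [exact: pf|exact: pg].
Qed.

Lemma CkM k f g : Ck k f -> Ck k g -> Ck k (f * g).
Proof.
elim: k f g => [|k IH] f g.
  by move=> /= cf cg x; apply: continuousM; [exact: cf|exact: cg].
move=> hf hg; have [df pf] := hf; have [dg pg] := hg.
split=> [x|i]; first exact: differentiableM.
have -> : partial i (f * g) = partial i f * g + f * partial i g.
  by apply/funext => x; rewrite partialM.
by apply: CkD; apply: IH => //; [exact: pf|exact: CkS|exact: CkS|exact: pg].
Qed.

Lemma Ck_expR k f : Ck k f -> Ck k (expR \o f).
Proof.
elim: k f => [|k IH] f.
  by move=> /= cf x; apply: continuous_comp; [exact: cf|exact: continuous_expR].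
move=> hf; have [df pf] := hf.
split=> [x|i].
  apply: differentiable_comp => //.
  by apply/derivable1_diffP; exact: derivable_expR.
have -> : partial i (expR \o f) = (expR \o f) * partial i f.
  by apply/funext => x; rewrite partial_expR.
by apply: CkM; [apply: IH; exact: CkS|exact: pf].
Qed.

Lemma grad_norm2_ge0 f x : 0 <= grad_norm2 f x.
Proof. by apply: sumr_ge0 => i _; exact: sqr_ge0. Qed.

Lemma continuous_grad_norm2 f : Ck 1 f -> continuous (grad_norm2 f).
Proof.
move=> [_ hp]; rewrite (_ : grad_norm2 f = \sum_i (partial i f ^+ 2)).
  apply: (big_ind (fun h : _ -> R => continuous h)) => [x|g h cg ch x|i _ x].
  - exact: cst_continuous.
  - by apply: continuousD; [exact: cg|exact: ch].
  - by rewrite /GRing.exp /=; apply: continuousM; exact: (hp i).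
by apply/funext => x; rewrite fct_sumE.
Qed.

End SmoothFunctions.

Section Young.
Context {R : realType}.

Lemma young_sqrB {eps : R} (a b : R) : 0 < eps ->
  (a - b) ^+ 2 <= (1 + eps^-1) * a ^+ 2 + (1 + eps) * b ^+ 2.
Proof.
move=> e0; rewrite -subr_ge0.
have -> : (1 + eps^-1) * a ^+ 2 + (1 + eps) * b ^+ 2 - (a - b) ^+ 2
    = (a + eps * b) ^+ 2 / eps by field; rewrite gt_eqF.
by apply: divr_ge0; [exact: sqr_ge0|exact: ltW].
Qed.

Lemma young_sum_sqrB {n} {eps : R} (a b : 'I_n -> R) : 0 < eps ->
  \sum_(i < n) (a i - b i) ^+ 2 <=
  (1 + eps^-1) * \sum_(i < n) a i ^+ 2 + (1 + eps) * \sum_(i < n) b i ^+ 2.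
Proof.
move=> e0; rewrite !mulr_sumr -big_split /=; apply: ler_sum => i _.
exact: young_sqrB.
Qed.

Lemma normr_le_sqrD1 (a : R) : `|a| <= a ^+ 2 + 1.
Proof. by have := normr_ge0 a; rewrite -real_normK ?num_real //; nra. Qed.

End Young.

Section IntegralBounds.
Context {dT : measure_display} {T : measurableType dT} {R : realType}.
Context {mu : {measure set T -> \bar R}}.
Local Notation I h := (\int[mu]_x ((h x : R)%:E))%E.
Local Notation integrable h := (mu.-integrable setT (EFin \o h)).
Implicit Types (h k F rho : T -> R) (a b m : R).

Lemma integrable_of_le h k : measurable_fun setT h -> measurable_fun setT k ->
  (forall x, `|h x| <= k x) -> (I k < +oo)%E -> integrable h.
Proof.
move=> mh mk hk ik; have k0 x : 0 <= k x by apply: le_trans (hk x).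
apply: (@le_integrable _ _ _ _ _ measurableT _ (EFin \o k)).
- exact: measurableT_comp.
- by move=> x _ /=; rewrite lee_fin (le_trans (hk x)) // ler_norm.
apply/integrableP; split; first exact: measurableT_comp.
by rewrite (eq_integral (fun x => (k x)%:E)) // => x _ /=; rewrite ger0_norm.
Qed.

Lemma integrable_ge0 h : measurable_fun setT h -> (forall x, 0 <= h x) ->
  (I h < +oo)%E -> integrable h.
Proof. by move=> mh h0; apply: (integrable_of_le _ _ mh mh) => x; rewrite ger0_norm. Qed.

Lemma integral_fineK {h : T -> R} : integrable h -> I h = (fine (I h))%:E.
Proof. by move=> ih; rewrite fineK //; exact: (integrable_fin_num measurableT ih). Qed.

Lemma integrable_lincomb h k a b : integrable h -> integrable k ->
  integrable (fun x => a * h x + b * k x).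
Proof.
move=> ih ik; apply: (@eq_integrable _ _ _ mu setT measurableT
  (fun x => a%:E * (h x)%:E + b%:E * (k x)%:E)%E).
  by move=> x _; rewrite /= EFinD !EFinM.
by apply: integrableD => //; exact: integrableZl.
Qed.

Lemma integral_lincomb h k a b : integrable h -> integrable k ->
  I (fun x => a * h x + b * k x) = (a%:E * I h + b%:E * I k)%E.
Proof.
move=> ih ik; rewrite (eq_integral (fun x => a%:E * (h x)%:E + b%:E * (k x)%:E)%E).
  by rewrite integralD ?integralZl //; exact: integrableZl.
by move=> x _; rewrite EFinD !EFinM.
Qed.

Lemma ge0_integral_le_lincomb h k F c a b :
  measurable_fun setT h -> measurable_fun setT k -> measurable_fun setT F ->
  (forall x, 0 <= h x) -> (forall x, 0 <= k x) -> (forall x, 0 <= F x) ->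
  0 <= c -> 0 <= a -> 0 <= b -> (forall x, c * h x <= a * k x + b * F x) ->
  (c%:E * I h <= a%:E * I k + b%:E * I F)%E.
Proof.
move=> mh mk mF h0 k0 F0 c0 a0 b0 hkF.
have scale (g : T -> R) r : measurable_fun setT g -> (forall x, 0 <= g x) ->
    0 <= r -> (r%:E * I g = \int[mu]_x (r * g x)%:E)%E.
  move=> mg g0 r0; rewrite -ge0_integralZl_EFin //.
  - by move=> x _; rewrite lee_fin.
  - exact/measurable_EFinP.
have mscale (g : T -> R) r : measurable_fun setT g ->
    measurable_fun setT (fun x => (r * g x)%:E).
  by move=> mg; apply/measurable_EFinP; apply: measurable_funM => //; exact: measurable_cst.
rewrite !scale // -ge0_integralD //; last 4 first.
- by move=> x _; rewrite lee_fin mulr_ge0.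
- exact: mscale.
- by move=> x _; rewrite lee_fin mulr_ge0.
- exact: mscale.
apply: ge0_le_integral => //.
- by move=> x _; rewrite lee_fin mulr_ge0.
- exact: mscale.
- by apply: emeasurable_funD; exact: mscale.
- by move=> x _; rewrite -EFinD lee_fin.
Qed.

Section Weighted.
Context {rho F : T -> R}.
Hypotheses (mrho : measurable_fun setT rho) (mF : measurable_fun setT F).
Hypotheses (rho0 : forall x, 0 <= rho x) (irho : integrable rho).
Hypothesis iF2 : integrable (fun x => F x ^+ 2 * rho x).

Let mF2 : measurable_fun setT (fun x => F x ^+ 2 * rho x).
Proof. by apply: measurable_funM => //; exact: measurable_funX. Qed.

Lemma integrable_mul_weight : integrable (fun x => F x * rho x).
Proof.
apply: (integrable_of_le _ (fun x => 1 * (F x ^+ 2 * rho x) + 1 * rho x)).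
- exact: measurable_funM.
- by apply: measurable_funD; apply: measurable_funM => //; exact: measurable_cst.
- move=> x; rewrite normrM (ger0_norm (rho0 x)) !mul1r.
  by rewrite -[X in _ <= _ + X]mul1r -mulrDl ler_wpM2r ?normr_le_sqrD1.
by rewrite integral_lincomb // (integral_fineK iF2) (integral_fineK irho) -!EFinM -EFinD ltry.
Qed.

Lemma integrable_sqr_sub_weight m : integrable (fun x => (F x - m) ^+ 2 * rho x).
Proof.
apply: (integrable_of_le _
  (fun x => 2 * (F x ^+ 2 * rho x) + (2 * m ^+ 2) * rho x)).
- apply: measurable_funM => //; apply: measurable_funX.
  by apply: measurable_funB => //; exact: measurable_cst.
- by apply: measurable_funD; apply: measurable_funM => //; exact: measurable_cst.
- move=> x; rewrite ger0_norm; last by rewrite mulr_ge0 // sqr_ge0.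
  rewrite mulrA -mulrDl ler_wpM2r //.
  by have := young_sqrB (F x) m ltr01; rewrite invr1.
by rewrite integral_lincomb // (integral_fineK iF2) (integral_fineK irho) -!EFinM -EFinD ltry.
Qed.

Lemma integral_sqr_sub_mean_le m : I rho = 1%E ->
  (I (fun x => (F x - fine (I (fun x => F x * rho x))) ^+ 2 * rho x)
     <= I (fun x => (F x - m) ^+ 2 * rho x))%E.
Proof.
move=> Irho; set a := fine _.
have iFrho := integrable_mul_weight.
have Ia : I (fun x => F x * rho x) = a%:E by exact: integral_fineK.
set c1 := 2 * (a - m); set c2 := (a - m) ^+ 2 - 2 * (a - m) * a.
rewrite [X in (_ <= X)%E](eq_integral (fun x => (1 * ((F x - a) ^+ 2 * rho x) +
   1 * (c1 * (F x * rho x) + c2 * rho x))%:E)); last first.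
  by move=> x _; congr (_%:E); rewrite /c1 /c2; ring.
rewrite integral_lincomb ?integrable_sqr_sub_weight ?integrable_lincomb //.
rewrite integral_lincomb // Ia Irho !mul1e mule1 -!EFinM -EFinD.
apply: leeDl; rewrite lee_fin /c1 /c2.
by rewrite addrC subrK sqr_ge0.
Qed.

End Weighted.

Lemma integral_gt0_neq0 h rho : measurable_fun setT h ->
  measurable_fun setT rho -> (forall x, 0 < h x) -> (forall x, 0 <= rho x) ->
  I rho = 1%E -> I h <> 0%E.
Proof.
move=> mh mrho h0 rho0 Irho Ih.
have : ae_eq mu setT (EFin \o h) (cst 0%E).
  apply/(ae_eq_integral_abs mu measurableT); first exact: measurableT_comp.
  by rewrite -Ih; apply: eq_integral => x _ /=; rewrite gtr0_norm.
move=> [N [mN N0 sub]].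
have mT0 : mu setT = 0%E.
  apply: (subset_measure0 measurableT mN) => // x _; apply: sub => /= hx.
  by move: (hx Logic.I) => [] /eqP; rewrite gt_eqF.
have := integral_abs_eq0 measurableT ((measurable_EFinP _ _).2 mrho) mT0.
rewrite (eq_integral (fun x => (rho x)%:E)) => [|x _]; last by rewrite /= ger0_norm.
by rewrite Irho => /eqP; rewrite eqe oner_eq0.
Qed.

End IntegralBounds.

Section Tilt.
Context {R : realType} {d : nat}.
Implicit Types (U f : 'rV[R]_d -> R) (m : R).

(* (f - m) e^{-U/2}: its square against e^{-W} dx is (f - m)^2 against
   e^{-(U + W)} dx. *)
Definition tilt U m f : 'rV[R]_d -> R :=
  (f + cst (- m)) * (expR \o (cst (- 2^-1) * U)).

Lemma tiltE U m f x : tilt U m f x = (f x - m) * expR (- 2^-1 * U x).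
Proof. by []. Qed.

Lemma smooth_tilt U m f : smooth U -> smooth f -> smooth (tilt U m f).
Proof.
move=> sU sf k; apply: CkM; first by apply: CkD; [exact: sf|exact: Ck_cst].
by apply: Ck_expR; apply: CkM; [exact: Ck_cst|exact: sU].
Qed.

Lemma partial_tilt U m f i x : differentiable U x -> differentiable f x ->
  partial i (tilt U m f) x =
  expR (- 2^-1 * U x) * (partial i f x - (f x - m) * (partial i U x / 2)).
Proof.
move=> dU df.
have dcU : differentiable (cst (- 2^-1) * U) x.
  by apply: differentiableM => //; exact: differentiable_cst.
have dexp : differentiable (expR \o (cst (- 2^-1) * U)) x.
  by apply: differentiable_comp => //; apply/derivable1_diffP; exact: derivable_expR.
have dfm : differentiable (f + cst (- m)) x.
  by apply: differentiableD => //; exact: differentiable_cst.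
rewrite /tilt partialM // partialD // partial_expR // partialM //.
rewrite !partial_cst /=.
have -> : (cst (- 2^-1) * U) x = - 2^-1 * U x by [].
have -> : (f + cst (- m)) x = f x - m by [].
ring.
Qed.

Lemma grad_norm2_tilt_le U m f (eps : R) x : 0 < eps ->
  differentiable U x -> differentiable f x ->
  grad_norm2 (tilt U m f) x <= expR (- U x) * ((1 + eps^-1) * grad_norm2 f x +
    (1 + eps) * ((f x - m) ^+ 2 * grad_norm2 U x / 4)).
Proof.
move=> e0 dU df; rewrite /grad_norm2.
under eq_bigr do rewrite partial_tilt // exprMn.
have -> : expR (- 2^-1 * U x) ^+ 2 = expR (- U x).
  by rewrite -expRM_natl; congr expR; field.
rewrite -mulr_sumr ler_wpM2l ?expR_ge0 //.
have -> : (f x - m) ^+ 2 * (\sum_i partial i U x ^+ 2) / 4 =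
    \sum_i ((f x - m) * (partial i U x / 2)) ^+ 2.
  by rewrite mulr_sumr mulr_suml; apply: eq_bigr => i _; field.
exact: young_sum_sqrB.
Qed.

End Tilt.

Section ExtendedBounds.
Context {R : realType}.

Lemma ereal_sup_range_fine_ub (T : Type) (F : T -> R) :
  (ereal_sup (range (EFin \o F)) < +oo)%E ->
  forall x, F x <= fine (ereal_sup (range (EFin \o F))).
Proof.
move=> supF x.
have Fx : ((F x)%:E <= ereal_sup (range (EFin \o F)))%E.
  by apply: ereal_sup_ubound; exists x.
rewrite -lee_fin fineK // fin_numE; apply/andP; split; last by rewrite lt_eqF.
by apply/eqP => supN; rewrite supN leeNy_eq in Fx.
Qed.

Lemma fine_lt_pos (x : \bar R) (y : R) : 0 < y -> (x < y%:E)%E -> fine x < y.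
Proof. by case: x => [r| |] //= y0; rewrite lte_fin. Qed.

(* In \bar R, 0 * +oo = 0: this is the case K = 0, G = +oo. *)
Lemma lee_absorb (X s K : R) (G : \bar R) : s < 1 -> 0 <= K -> (0 <= G)%E ->
  (X%:E <= K%:E * G + (s * X)%:E)%E -> (X%:E <= (K / (1 - s))%:E * G)%E.
Proof.
move=> s1 K0; have s1' : 0 < 1 - s by rewrite subr_gt0.
case: G => [g| |] // g0 XKG.
- rewrite -EFinM lee_fin mulrAC ler_pdivlMr //.
  by move: XKG; rewrite -EFinM -EFinD lee_fin; nra.
- have [K00|Kpos] := eqVneq K 0.
    by move: XKG; rewrite K00 mul0r !mul0e add0e !lee_fin; nra.
  have Ks0 : 0 < K / (1 - s) by rewrite divr_gt0 // lt_neqAle eq_sym Kpos K0.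
  by rewrite mulry gtr0_sg // mul1e leey.
Qed.

End ExtendedBounds.

Section PerturbedPoincare.
Variables (R : realType) (d : nat) (lam : {measure set (d.-tuple R) -> \bar R}).
Variables (U W omega : 'rV[R]_d -> R) (C eps s : R).
Hypotheses (sU : smooth U) (sW : smooth W) (eps_gt0 : 0 < eps) (C_ge0 : 0 <= C).
Hypotheses (omega_ge0 : forall x, 0 <= omega x)
  (momega : measurable_fun setT (omega \o @rv_of R d)).
Let dnu x := expR (- W x).
Let dmu x := expR (- (U x + W x)).
Hypotheses (nu1 : dint lam dnu (fun _ => 1) = 1%E)
  (mu1 : dint lam dmu (fun _ => 1) = 1%E).
Hypothesis poincare_nu : weighted_poincare lam dnu omega C.
Hypothesis s_ub : forall x, C * ((1 + eps) / 4) * grad_norm2 U x * omega x ^+ 2 <= s.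

Local Notation rv := (@rv_of R d).
Local Notation integrable h := (lam.-integrable setT (EFin \o h)).
Let tilt_factor x := expR (- 2^-1 * U x).

Let measurable_rv (h : 'rV[R]_d -> R) : continuous h -> measurable_fun setT (h \o rv).
Proof. exact: continuous_measurable_rv_of. Qed.

Let cU : continuous U. Proof. exact: smooth_continuous. Qed.
Let cW : continuous W. Proof. exact: smooth_continuous. Qed.

Let mdnu : measurable_fun setT (dnu \o rv).
Proof.
apply: measurable_rv => x; apply: continuous_comp; last exact: continuous_expR.
by apply: continuousN; exact: cW.
Qed.

Let mdmu : measurable_fun setT (dmu \o rv).
Proof.
apply: measurable_rv => x; apply: continuous_comp; last exact: continuous_expR.
by apply: continuousN; apply: continuousD; [exact: cU|exact: cW].
Qed.

Let mtilt_factor : measurable_fun setT (tilt_factor \o rv).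
Proof.
apply: measurable_rv => x; apply: continuous_comp; last exact: continuous_expR.
by apply: continuousM; [exact: cst_continuous|exact: cU].
Qed.

Let dnu_ge0 x : 0 <= dnu x. Proof. exact: expR_ge0. Qed.
Let dmu_ge0 x : 0 <= dmu x. Proof. exact: expR_ge0. Qed.

Let tilt_factor_sqr x : tilt_factor x ^+ 2 * dnu x = dmu x.
Proof. by rewrite -expRM_natl -expRD; congr expR; field. Qed.

Let Inu : (\int[lam]_t ((dnu \o rv) t)%:E = 1)%E.
Proof. by rewrite -nu1; apply: eq_integral => t _; rewrite /= mul1r. Qed.

Let Imu : (\int[lam]_t ((dmu \o rv) t)%:E = 1)%E.
Proof. by rewrite -mu1; apply: eq_integral => t _; rewrite /= mul1r. Qed.

Let inu : integrable (dnu \o rv).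
Proof. by apply: integrable_ge0 => // [t|]; [exact: dnu_ge0|rewrite Inu ltry]. Qed.

Let imu : integrable (dmu \o rv).
Proof. by apply: integrable_ge0 => // [t|]; [exact: dmu_ge0|rewrite Imu ltry]. Qed.

Let s_ge0 : 0 <= s.
Proof.
apply: le_trans (s_ub 0); rewrite mulr_ge0 ?sqr_ge0 // mulr_ge0 //.
  by rewrite mulr_ge0 // divr_ge0 // addr_ge0 // ltW.
by rewrite sumr_ge0 // => i _; exact: sqr_ge0.
Qed.

Lemma tilt_energy_le f m x : differentiable U x -> differentiable f x ->
  C * (grad_norm2 (tilt U m f) x * omega x ^+ 2 * dnu x) <=
  (1 + eps^-1) * C * (grad_norm2 f x * omega x ^+ 2 * dmu x) +
  s * ((f x - m) ^+ 2 * dmu x).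
Proof.
move=> dU df; rewrite -(tilt_factor_sqr x) /tilt_factor.
have -> : expR (- 2^-1 * U x) ^+ 2 = expR (- U x).
  by rewrite -expRM_natl; congr expR; field.
apply: le_trans (_ : C * (expR (- U x) * ((1 + eps^-1) * grad_norm2 f x +
    (1 + eps) * ((f x - m) ^+ 2 * grad_norm2 U x / 4)) * omega x ^+ 2 * dnu x) <= _).
  by rewrite ler_wpM2l // !ler_wpM2r ?sqr_ge0 // grad_norm2_tilt_le.
rewrite (_ : C * _ = (1 + eps^-1) * C * (grad_norm2 f x * omega x ^+ 2 *
   (expR (- U x) * dnu x)) + (C * ((1 + eps) / 4) * grad_norm2 U x *
   omega x ^+ 2) * ((f x - m) ^+ 2 * (expR (- U x) * dnu x))); last by ring.
by rewrite lerD2l ler_wpM2r ?s_ub // mulr_ge0 ?sqr_ge0 // mulr_ge0 // expR_ge0.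
Qed.

Section Tilted.
Variable f : 'rV[R]_d -> R.
Hypotheses (sf : smooth f) (f2_fin : (dint lam dmu (fun x => (f x ^+ 2)%R) < +oo)%E).

Let mf : measurable_fun setT (f \o rv).
Proof. by apply: measurable_rv; exact: smooth_continuous. Qed.

Let if2 : integrable (fun t => f (rv t) ^+ 2 * dmu (rv t)).
Proof.
apply: integrable_ge0 => // [|t]; last by rewrite mulr_ge0 ?sqr_ge0.
by apply: measurable_funM => //; exact: measurable_funX.
Qed.

Let ifE : integrable (fun t => f (rv t) * tilt_factor (rv t) * dnu (rv t)).
Proof.
apply: (integrable_mul_weight (F := fun t => f (rv t) * tilt_factor (rv t))) => //.
- exact: measurable_funM.
- apply: (eq_integrable measurableT _ _ _ if2) => t _ /=.
  by congr (_%:E); rewrite exprMn -[RHS]mulrA tilt_factor_sqr.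
Qed.

Let iE : integrable (fun t => tilt_factor (rv t) * dnu (rv t)).
Proof.
apply: integrable_mul_weight => //.
by apply: (eq_integrable measurableT _ _ _ imu) => t _ /=; rewrite tilt_factor_sqr.
Qed.

(* Chosen so that the tilt of f has mean zero under nu (dint_tilt_center). *)
Let center := fine (\int[lam]_t (f (rv t) * tilt_factor (rv t) * dnu (rv t))%:E)%E /
  fine (\int[lam]_t (tilt_factor (rv t) * dnu (rv t))%:E)%E.

Lemma dint_tilt_center : dint lam dnu (tilt U center f) = 0%E.
Proof.
have IE0 : (\int[lam]_t (tilt_factor (rv t) * dnu (rv t))%:E)%E <> 0%E.
  apply: (integral_gt0_neq0 _ (dnu \o rv)) => //.
  - exact: measurable_funM.
  - by move=> t; rewrite mulr_gt0 ?expR_gt0.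
  - by move=> t; exact: dnu_ge0.
rewrite /dint (eq_integral (fun t => (1 * (f (rv t) * tilt_factor (rv t) * dnu (rv t))
  + (- center) * (tilt_factor (rv t) * dnu (rv t)))%:E)); last first.
  by move=> t _; rewrite tiltE; congr (_%:E); rewrite /tilt_factor; ring.
rewrite integral_lincomb // (integral_fineK ifE) (integral_fineK iE) -!EFinM -EFinD.
rewrite /center mulNr divfK ?mul1r ?subrr //.
by apply/eqP => E0; apply: IE0; rewrite (integral_fineK iE) E0.
Qed.

Let iQ : integrable (fun t => (f (rv t) - center) ^+ 2 * dmu (rv t)).
Proof.
by apply: (integrable_sqr_sub_weight (rho := dmu \o rv) (F := f \o rv)) => // t;
  exact: dmu_ge0.
Qed.

Let X := fine (dint lam dmu (fun x => (f x - center) ^+ 2)).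

Let IX : dint lam dmu (fun x => (f x - center) ^+ 2) = X%:E.
Proof. exact: integral_fineK iQ. Qed.

Lemma dint_sqr_tilt m : dint lam dnu (fun x => tilt U m f x ^+ 2) =
  dint lam dmu (fun x => (f x - m) ^+ 2).
Proof.
apply: eq_integral => t _; congr (_%:E).
by rewrite tiltE exprMn -[LHS]mulrA tilt_factor_sqr.
Qed.

Lemma poincare_tilt : (X%:E <= C%:E *
  dint lam dnu (fun x => (grad_norm2 (tilt U center f) x * omega x ^+ 2)%R))%E.
Proof.
have <- : dvar lam dnu (tilt U center f) = X%:E.
  rewrite /dvar /dmean dint_tilt_center /= -IX -dint_sqr_tilt.
  by apply: eq_integral => t _; rewrite subr0.
apply: poincare_nu; first exact: smooth_tilt.
  by apply: measurable_rv; apply: smooth_continuous; exact: smooth_tilt.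
by rewrite dint_sqr_tilt IX ltry.
Qed.

Lemma dint_energy_tilt_le : (C%:E *
  dint lam dnu (fun x => (grad_norm2 (tilt U center f) x * omega x ^+ 2)%R) <=
  ((1 + eps^-1) * C)%:E * dint lam dmu (fun x => (grad_norm2 f x * omega x ^+ 2)%R) +
  (s * X)%:E)%E.
Proof.
have mgrad g rho : Ck 1 g -> measurable_fun setT (rho \o rv) ->
    measurable_fun setT (fun t => grad_norm2 g (rv t) * omega (rv t) ^+ 2 * rho (rv t)).
  move=> g1 mrho; apply: measurable_funM => //; apply: measurable_funM.
    by apply: measurable_rv; exact: continuous_grad_norm2.
  exact: measurable_funX.
have [dU _] := sU 1; have [df _] := sf 1.
rewrite [(s * X)%:E]EFinM -IX; apply: ge0_integral_le_lincomb => //.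
- by apply: mgrad => //; exact: smooth_tilt.
- exact: mgrad.
- apply: measurable_funM => //; apply: measurable_funX.
  by apply: measurable_funB => //; exact: measurable_cst.
- by move=> t; rewrite !mulr_ge0 ?grad_norm2_ge0 ?sqr_ge0.
- by move=> t; rewrite !mulr_ge0 ?grad_norm2_ge0 ?sqr_ge0.
- by move=> t; rewrite mulr_ge0 ?sqr_ge0.
- by rewrite mulr_ge0 // addr_ge0 // invr_ge0 ltW.
- by move=> t; exact: tilt_energy_le.
Qed.

Hypothesis s_lt1 : s < 1.

Lemma dvar_le_energy : (dvar lam dmu f <= ((1 + eps^-1) * C / (1 - s))%:E *
  dint lam dmu (fun x => (grad_norm2 f x * omega x ^+ 2)%R))%E.
Proof.
have var_le : (dvar lam dmu f <= X%:E)%E.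
  rewrite -IX; apply: (integral_sqr_sub_mean_le (rho := dmu \o rv) (F := f \o rv)) => //.
  by move=> t; exact: dmu_ge0.
apply: le_trans var_le _; apply: lee_absorb => //.
- by rewrite mulr_ge0 // addr_ge0 // invr_ge0 ltW.
- by apply: integral_ge0 => t _; rewrite lee_fin !mulr_ge0 ?grad_norm2_ge0 ?sqr_ge0.
- exact: le_trans poincare_tilt dint_energy_tilt_le.
Qed.

End Tilted.

Lemma weighted_poincare_perturbed : s < 1 ->
  weighted_poincare lam dmu omega ((1 + eps^-1) * C / (1 - s)).
Proof. by move=> s_lt1 f sf _ f2; exact: dvar_le_energy. Qed.

End PerturbedPoincare.

Theorem proposition3p2 (R : realType) (d : nat)
  (lam : {measure set (d.-tuple R) -> \bar R})
  (U W omega : 'rV[R]_d -> R) (C eps : R) :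
  is_lebesgue_measure lam ->
  smooth U -> smooth W ->
  (dint lam (fun x => expR (- W x)) (fun _ => 1) = 1%E) ->
  (dint lam (fun x => expR (- (U x + W x))) (fun _ => 1) = 1%E) ->
  (forall x, 0 <= omega x) ->
  measurable_fun [set: d.-tuple R] (omega \o @rv_of R d) ->
  0 <= C ->
  weighted_poincare lam (fun x => expR (- W x)) omega C ->
  0 < eps ->
  let s := ereal_sup (range (fun x =>
             (C * ((1 + eps) / 4) * grad_norm2 U x * omega x ^+ 2)%:E)) in
  (s < 1%E)%E ->
  weighted_poincare lam (fun x => expR (- (U x + W x))) omega
    ((1 + eps^-1) * C / (1 - fine s)).
Proof.
(* The argument works for any reference measure lam. *)
move=> _ sU sW nu1 mu1 omega_ge0 momega C_ge0 poincare_nu eps_gt0 s s_lt1.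
apply: weighted_poincare_perturbed => //.
- exact: ereal_sup_range_fine_ub (lt_le_trans s_lt1 (leey _)).
- exact: fine_lt_pos ltr01 s_lt1.
Qed.
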